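(* Let $(a_i)_{i=1}^n$, $a_i=(m_i,x_i,v_i)$, be a system of $n$ particles (as defined in the context) with sticky trajectories $\gamma_1,\dots,\gamma_n$. Let $P_0=(0,0)$ and $P_k=\left(\sum_{i=1}^k m_i,\ \sum_{i=1}^k m_i v_i\right)$ for $1\le k\le n$, let $f:[0,\sum_{i=1}^n m_i]\to\mathbb{R}$ be the continuous piecewise linear function whose graph is the union of the segments $[P_{k-1},P_k]$, and let $r$ be the convex envelope of $f$. Let $0=k_0<k_1<\cdots<k_\ell=n$ be all indices $k$ for which $P_k$ lies on the graph of $r$, and for $1\le j\le\ell$ let $T_j=\{a_i: k_{j-1}<i\le k_j\}$. Then for $i\neq j$, no particle of $T_i$ ever collides with a particle of $T_j$, i.e. $\gamma_p(t)\neq\gamma_q(t)$ for all $t\ge 0$ whenever $a_p\in T_i$, $a_q\in T_j$.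
   Context: A particle is a triple $a=(m,x,v)\in\mathbb{R}_{>0}\times\mathbb{R}\times\mathbb{R}$ (mass, initial position, initial velocity). A system of $n$ particles is an $n$-tuple $(a_i)_{i=1}^n$ with $x_i<x_j$ iff $i<j$. To each particle is associated a unique continuous piecewise linear trajectory $\gamma_i:[0,\infty)\to\mathbb{R}$ such that: (1) $\gamma_i(0)=x_i$ and $\dot\gamma_i(0+)=v_i$; (2) (stickiness) if $\gamma_i(s)=\gamma_j(s)$ then $\gamma_i(t)=\gamma_j(t)$ for all $t\ge s$; (3) (conservation of momentum) if $\gamma_{i_1}(t)=\cdots=\gamma_{i_p}(t)\neq\gamma_i(t)$ for all other $i$, at some $t>0$, then $\dot\gamma_{i_q}(t+)=\frac{\sum_{k=1}^p m_{i_k}\dot\gamma_{i_k}(t-)}{\sum_{k=1}^p m_{i_k}}$ for each $q$. Here $\dot\gamma(t\pm)$ denotes one-sided derivatives. The convex envelope of $f$ is $\sup\{g\le f: g \text{ convex}\}$. *)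

From HB Require Import structures.
From mathcomp Require Import all_boot all_order all_algebra.
From mathcomp Require Import all_classical all_reals all_analysis.
Set Implicit Arguments.
Unset Strict Implicit.
Unset Printing Implicit Defensive.
Import Order.TTheory GRing.Theory Num.Theory numFieldNormedType.Exports.
Local Open Scope ring_scope.

Section StickyDefs.
Context {R : realType}.

Definition affine_on (g : R -> R) (a b : R) : Prop :=
  exists alpha beta : R, forall y, a <= y <= b -> g y = alpha + beta * y.

Definition cont_pw_linear (g : R -> R) : Prop :=
  ({within [set y : R | 0 <= y], continuous g})%classic /\
  exists s : seq R, forall a b, 0 <= a -> a <= b ->
    (forall c, c \in s -> ~ (a < c < b)) -> affine_on g a b.

Definition rslope (g : R -> R) (t u : R) : Prop :=
  exists2 e : R, 0 < e & forall s, t <= s <= t + e -> g s = g t + u * (s - t).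

Definition lslope (g : R -> R) (t w : R) : Prop :=
  exists2 e : R, 0 < e &
    forall s, t - e <= s <= t -> 0 <= s -> g s = g t + w * (s - t).

(* a system of n particles a_i = (m i, x i, v i), indices 0..n-1 *)
Definition particle_system (n : nat) (m x : 'I_n -> R) : Prop :=
  (forall i, 0 < m i) /\ (forall i j : 'I_n, x i < x j <-> (i < j)%N).

Definition sticky_trajectories (n : nat) (m x v : 'I_n -> R)
    (gamma : 'I_n -> R -> R) : Prop :=
  [/\ forall i, cont_pw_linear (gamma i),
      forall i, gamma i 0 = x i,
      forall i, rslope (gamma i) 0 (v i),
      forall i j s t, 0 <= s -> s <= t -> gamma i s = gamma j s ->
                      gamma i t = gamma j t &
      forall t, 0 < t -> forall (w : 'I_n -> R) (i : 'I_n),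
        (forall j, gamma j t = gamma i t -> lslope (gamma j) t (w j)) ->
        rslope (gamma i) t
          ((\sum_(j | gamma j t == gamma i t) m j * w j)
             / (\sum_(j | gamma j t == gamma i t) m j))].

(* first coordinate of P_k : sum_{i=1}^k m_i  (particles indexed from 0) *)
Definition mass_prefix (n : nat) (m : 'I_n -> R) (k : nat) : R :=
  \sum_(i < n | (i < k)%N) m i.

(* second coordinate of P_k : sum_{i=1}^k m_i v_i *)
Definition mom_prefix (n : nat) (m v : 'I_n -> R) (k : nat) : R :=
  \sum_(i < n | (i < k)%N) m i * v i.

Definition convex_on (a b : R) (g : R -> R) : Prop :=
  forall y z l, a <= y <= b -> a <= z <= b -> 0 <= l <= 1 ->
    g (l * y + (1 - l) * z) <= l * g y + (1 - l) * g z.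

Definition convex_envelope (a b : R) (f : R -> R) : R -> R :=
  fun y => sup [set u : R | exists g : R -> R,
      [/\ convex_on a b g, (forall z, a <= z <= b -> g z <= f z) & u = g y]]%classic.

End StickyDefs.

From HB Require Import structures.
From mathcomp Require Import all_boot all_order all_algebra.
From mathcomp Require Import all_classical all_reals all_analysis.
From mathcomp Require Import ring lra zify.
Import Order.TTheory GRing.Theory Num.Theory numFieldNormedType.Exports.
Set Implicit Arguments.
Unset Strict Implicit.
Unset Printing Implicit Defensive.
Local Open Scope ring_scope.

(* If a particle with index at most k ever meets one with index above k, then, trajectories
   being ordered, a_k meets a_(k+1); let T be their first meeting time and X their position.
   Before T no collision involves particles on both sides of the gap between k and k+1, so the
   particles at X at time T on either side form two collision-closed blocks L and R of
   consecutive particles.  Momentum is conserved within each block, hence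
   X = x_L + T v_L = x_R + T v_R, where x_B and v_B are the mass-weighted means of the initial
   positions and velocities over B.  But x_L <= x_k < x_(k+1) <= x_R, and v_L <= v_R because
   v_L and v_R are the slopes of the chords of f over L and R, which meet at the point P_k of
   the convex envelope. *)

Section Slopes.
Context {R : realType}.
Implicit Types (g h : R -> R) (s t u w c : R).

Lemma pos_le2 {a b : R} : 0 < a -> 0 < b -> exists d, [/\ 0 < d, d <= a & d <= b].
Proof.
by move=> a0 b0; exists (Num.min a b); split; rewrite ?lt_min ?a0 ?b0 // ge_min lexx ?orbT.
Qed.

Lemma finite_gap (cs : seq R) t :
  exists2 e : R, 0 < e & forall c, c \in cs -> c != t -> e <= `|c - t|.
Proof.
elim: cs => [|c cs [e e0 He]]; first by exists 1.
have [->|ct] := eqVneq c t.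
  by exists e => // c'; rewrite inE => /orP[/eqP->|/He]; rewrite ?eqxx.
exists (Num.min e `|c - t|); first by rewrite lt_min e0 normr_gt0 subr_eq0.
move=> c'; rewrite inE ge_min => /orP[/eqP->|/He H] ct'; first by rewrite lexx orbT.
by rewrite H.
Qed.

Lemma cont_pw_linear_rslope g t : cont_pw_linear g -> 0 <= t -> exists u, rslope g t u.
Proof.
move=> [_ [cs Hcs]] t0; have [e e0 He] := finite_gap cs t.
have [al [be Hab]] : affine_on g t (t + e).
  apply: Hcs => //; first lra.
  move=> c cc /andP[tc ce]; have := He c cc (negbT (gt_eqF tc)).
  by rewrite ger0_norm; lra.
exists be, e => // s Hs; rewrite !Hab ?lexx /=; [ring | lra | by []].
Qed.

Lemma cont_pw_linear_lslope g t : cont_pw_linear g -> 0 < t -> exists w, lslope g t w.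
Proof.
move=> [_ [cs Hcs]] t0; have [e e0 He] := finite_gap cs t.
have [d [d0 de dt]] := pos_le2 e0 t0.
have [al [be Hab]] : affine_on g (t - d) t.
  apply: Hcs; [lra | lra |] => c cc /andP[dc ct]; have := He c cc (negbT (lt_eqF ct)).
  by rewrite ltr0_norm; lra.
exists be, d => // s Hs _; rewrite !Hab ?lexx ?andbT //=; [ring | lra].
Qed.

Lemma rslope_unique g t u1 u2 : rslope g t u1 -> rslope g t u2 -> u1 = u2.
Proof.
move=> [e1 e10 H1] [e2 e20 H2]; have [d [d0 d1 d2]] := pos_le2 e10 e20.
have r1 : t <= t + d <= t + e1 by apply/andP; lra.
have r2 : t <= t + d <= t + e2 by apply/andP; lra.
have tdt : t + d - t = d by ring.
have : u1 * d = u2 * d by move: (H1 _ r1) (H2 _ r2); rewrite tdt => -> /addrI.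
by move=> E; apply: (mulIf _ E); rewrite gt_eqF.
Qed.

Lemma rslope_comb g h t a b c :
  rslope g t a -> rslope h t b -> rslope (fun s => c * g s + h s) t (c * a + b).
Proof.
move=> [e1 e10 H1] [e2 e20 H2]; have [d [d0 d1 d2]] := pos_le2 e10 e20.
exists d => // s /andP[s1 s2].
have r1 : t <= s <= t + e1 by apply/andP; lra.
have r2 : t <= s <= t + e2 by apply/andP; lra.
rewrite (H1 _ r1) (H2 _ r2); ring.
Qed.

Lemma lslope_comb g h t a b c :
  lslope g t a -> lslope h t b -> lslope (fun s => c * g s + h s) t (c * a + b).
Proof.
move=> [e1 e10 H1] [e2 e20 H2]; have [d [d0 d1 d2]] := pos_le2 e10 e20.
exists d => // s /andP[s1 s2] s0.
have r1 : t - e1 <= s <= t by apply/andP; lra.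
have r2 : t - e2 <= s <= t by apply/andP; lra.
rewrite (H1 _ r1 s0) (H2 _ r2 s0); ring.
Qed.

Lemma rslope_wsum (I : Type) (r : seq I) (P : pred I) (c : I -> R)
    (F : I -> R -> R) (U : I -> R) t :
  (forall i, P i -> rslope (F i) t (U i)) ->
  rslope (fun s => \sum_(i <- r | P i) c i * F i s) t (\sum_(i <- r | P i) c i * U i).
Proof.
move=> HF; elim: r => [|i r IH].
  rewrite big_nil; have -> : (fun s => \sum_(i <- [::] | P i) c i * F i s) = fun=> 0.
    by apply/funext => s; rewrite big_nil.
  by exists 1 => // s _; rewrite mul0r addr0.
rewrite big_cons; have -> : (fun s => \sum_(j <- i :: r | P j) c j * F j s) =
    fun s => if P i then c i * F i s + \sum_(j <- r | P j) c j * F j s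
             else \sum_(j <- r | P j) c j * F j s.
  by apply/funext => s; rewrite big_cons.
by case: ifP => // Pi; apply: rslope_comb (HF i Pi) IH.
Qed.

Lemma lslope_wsum (I : Type) (r : seq I) (P : pred I) (c : I -> R)
    (F : I -> R -> R) (U : I -> R) t :
  (forall i, P i -> lslope (F i) t (U i)) ->
  lslope (fun s => \sum_(i <- r | P i) c i * F i s) t (\sum_(i <- r | P i) c i * U i).
Proof.
move=> HF; elim: r => [|i r IH].
  rewrite big_nil; have -> : (fun s => \sum_(i <- [::] | P i) c i * F i s) = fun=> 0.
    by apply/funext => s; rewrite big_nil.
  by exists 1 => // s _; rewrite mul0r addr0.
rewrite big_cons; have -> : (fun s => \sum_(j <- i :: r | P j) c j * F j s) =
    fun s => if P i then c i * F i s + \sum_(j <- r | P j) c j * F j s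
             else \sum_(j <- r | P j) c j * F j s.
  by apply/funext => s; rewrite big_cons.
by case: ifP => // Pi; apply: lslope_comb (HF i Pi) IH.
Qed.

Lemma affine_eq2 (a b c d t s1 s2 : R) : s1 != s2 ->
  a + b * (s1 - t) = c + d * (s1 - t) -> a + b * (s2 - t) = c + d * (s2 - t) ->
  a = c /\ b = d.
Proof.
move=> s12 E1 E2; suff bd : b = d by split=> //; move: E1; rewrite bd => /addIr.
have : (b - d) * (s1 - s2) = 0.
  transitivity (a + b * (s1 - t) - (a + b * (s2 - t)) -
                (c + d * (s1 - t) - (c + d * (s2 - t)))); first by ring.
  by rewrite E1 E2 subrr.
by move/eqP; rewrite mulf_eq0 !subr_eq0 (negbTE s12) orbF => /eqP.
Qed.

Lemma lslope_affine_before g t a V w : 0 < t ->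
  (forall s, 0 <= s < t -> g s = a + V * s) -> lslope g t w ->
  w = V /\ g t = a + V * t.
Proof.
move=> t0 Hg [e e0 He]; have [d [d0 de dt]] := pos_le2 e0 t0.
have E s : t - d <= s < t -> a + V * t + V * (s - t) = g t + w * (s - t).
  move=> /andP[s1 s2]; have -> : a + V * t + V * (s - t) = a + V * s by ring.
  rewrite -Hg; last by apply/andP; lra.
  by apply: He; [apply/andP | ]; lra.
have d12 : t - d != t - d / 2 by rewrite lt_eqF //; lra.
have /E E1 : t - d <= t - d < t by apply/andP; lra.
have /E E2 : t - d <= t - d / 2 < t by apply/andP; lra.
have [gtE Vw] := affine_eq2 d12 E1 E2.
by rewrite gtE Vw.
Qed.

Lemma affine_of_slopes g T V : rslope g 0 V ->
  (forall t, 0 < t < T -> exists u, lslope g t u /\ rslope g t u) ->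
  forall s, 0 <= s < T -> g s = g 0 + V * s.
Proof.
move=> g0V slopes; have [T0|T0] := leP T 0; first by move=> s /andP[s0 sT]; lra.
pose A := [set tau | tau <= T /\ forall s, 0 <= s <= tau -> g s = g 0 + V * s]%classic.
have A0 : A 0.
  split=> [|s /andP[s0 s0']]; first exact: ltW.
  have -> : s = 0 by lra.
  by rewrite mulr0 addr0.
have hA : has_sup A by split; [exists 0 | exists T => tau []].
have ub tau : A tau -> tau <= sup A by move/(sup_upper_bound hA).
have sgT : sup A <= T by apply: ge_sup; [exists 0 | move=> tau []].
have before s : 0 <= s < sup A -> g s = g 0 + V * s.
  move=> /andP[s0]; rewrite -subr_gt0 => ssg.
  have [tau [_ Htau] stau] := sup_adherent ssg hA.
  by apply: Htau; apply/andP; split => //; lra.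
have sg0 := ub 0 A0; move: (sup A) ub sgT before sg0 => sg ub sgT before sg0.
suff : ~ sg < T.
  by move=> /negP; rewrite -leNgt => Tsg s /andP[s0 sT]; apply: before; apply/andP; lra.
move=> sgT'.
have [Esg rsg] : g sg = g 0 + V * sg /\ rslope g sg V.
  have [sgp|sgn] := ltP 0 sg.
    have [u [lu ru]] := slopes sg (introT andP (conj sgp sgT')).
    have [uV Eg] := lslope_affine_before sgp before lu.
    by rewrite uV in ru.
  have -> : sg = 0 by lra.
  by rewrite mulr0 addr0.
have [e e0 He] := rsg; have Tsg : 0 < T - sg by rewrite subr_gt0.
have [d [d0 de dT]] := pos_le2 e0 Tsg.
have : A (sg + d).
  split=> [|s /andP[s0 s1]]; first lra.
  have [ssg|sgs] := ltP s sg; first by apply: before; apply/andP.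
  rewrite He; last by apply/andP; lra.
  rewrite Esg; ring.
by move/ub; lra.
Qed.

End Slopes.

Section WeightedMean.
Context {R : realFieldType} {I : finType}.
Implicit Types (m F : I -> R) (S : pred I).

Definition weighted_mean m S F : R :=
  (\sum_(i | S i) m i * F i) / \sum_(i | S i) m i.

Variable m : I -> R.
Hypothesis m_gt0 : forall i, 0 < m i.

Lemma sum_mass_gt0 S i0 : S i0 -> 0 < \sum_(i | S i) m i.
Proof.
move=> Si0; rewrite (bigD1 i0) //=; apply: ltr_pwDl (m_gt0 i0) _.
by apply: sumr_ge0 => i _; exact: ltW.
Qed.

Lemma weighted_mean_le S F c i0 : S i0 -> (forall i, S i -> F i <= c) ->
  weighted_mean m S F <= c.
Proof.
move=> Si0 Fc; rewrite /weighted_mean ler_pdivrMr ?(sum_mass_gt0 Si0) // mulr_sumr.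
apply: ler_sum => i Si; rewrite [c * _]mulrC.
by apply: ler_wpM2l; [exact: ltW | exact: Fc].
Qed.

Lemma weighted_mean_ge S F c i0 : S i0 -> (forall i, S i -> c <= F i) ->
  c <= weighted_mean m S F.
Proof.
move=> Si0 Fc; rewrite /weighted_mean ler_pdivlMr ?(sum_mass_gt0 Si0) // mulr_sumr.
apply: ler_sum => i Si; rewrite [c * _]mulrC.
by apply: ler_wpM2l; [exact: ltW | exact: Fc].
Qed.

Lemma sum_class_weighted_means (T : eqType) (c : I -> T) S w :
  (forall i j, S i -> c j = c i -> S j) ->
  \sum_(i | S i) m i * weighted_mean m (fun j => c j == c i) w =
  \sum_(i | S i) m i * w i.
Proof.
move=> closedS; pose B i := \sum_(j | c j == c i) m j.
have B_neq0 i : B i != 0 by rewrite gt_eqF // (sum_mass_gt0 (eqxx (c i))).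
rewrite (eq_bigr (fun i => \sum_(j | S j && (c j == c i)) m i * (m j * w j / B j))).
  rewrite (exchange_big_dep S) => [|i j _ /andP[] //].
  apply: eq_bigr => j Sj; rewrite -mulr_suml /=.
  have -> : \sum_(i | S i && (S j && (c j == c i))) m i = B j.
    apply: eq_bigl => i; rewrite Sj [c j == c i]eq_sym andbC /=.
    by case: eqP => //= E; rewrite (closedS j i Sj E).
  by rewrite mulrC divfK.
move=> i Si; rewrite /weighted_mean -/(B i).
have -> : \sum_(j | c j == c i) m j * w j = \sum_(j | S j && (c j == c i)) m j * w j.
  by apply: eq_bigl => j; rewrite andbC; case: eqP => //= E; rewrite (closedS i j Si E).
rewrite mulr_suml mulr_sumr; apply: eq_bigr => j /andP[_ /eqP E].
by rewrite /B E.
Qed.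

End WeightedMean.

Lemma level_set_interval (R : realDomainType) n (g : 'I_n -> R) (a : 'I_n) :
  {homo g : i j / (i <= j)%N >-> i <= j} ->
  exists j l : 'I_n, (j <= a <= l)%N /\ forall i, (g i == g a) = (j <= i <= l)%N.
Proof.
move=> g_mono; have gaa : g a == g a := eqxx _.
have [j /eqP gj jmin] := arg_minnP (P := fun i => g i == g a) val gaa.
have [l /eqP gl lmax] := arg_maxnP (P := fun i => g i == g a) val gaa.
exists j, l; split=> [|i]; first by rewrite (jmin a gaa); exact: lmax.
apply/idP/idP => [gi|/andP[ji il]]; first by rewrite (jmin i gi); exact: lmax.
by rewrite eq_le -{1}gl -gj !g_mono.
Qed.

Section StickyParticles.
Context {R : realType} (n : nat) (m x v : 'I_n -> R) (gamma : 'I_n -> R -> R).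
Hypothesis Hps : particle_system m x.
Hypothesis Hst : sticky_trajectories m x v gamma.

Lemma mass_gt0 i : 0 < m i.
Proof. by case: Hps. Qed.

Lemma init_pos_lt (i j : 'I_n) : (i < j)%N -> x i < x j.
Proof. by case: Hps => _ H /H. Qed.

Lemma init_pos_le (i j : 'I_n) : (i <= j)%N -> x i <= x j.
Proof. by rewrite leq_eqVlt => /orP[/eqP/val_inj-> // | /init_pos_lt/ltW]. Qed.

Lemma traj0 i : gamma i 0 = x i.
Proof. by case: Hst. Qed.

Lemma traj_rslope i t : 0 <= t -> exists u, rslope (gamma i) t u.
Proof. by case: Hst => Hc _ _ _ _; apply: cont_pw_linear_rslope. Qed.

Lemma traj_lslope i t : 0 < t -> exists w, lslope (gamma i) t w.
Proof. by case: Hst => Hc _ _ _ _; apply: cont_pw_linear_lslope. Qed.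

Lemma traj_stick i j s t : 0 <= s <= t -> gamma i s = gamma j s -> gamma i t = gamma j t.
Proof. by case: Hst => _ _ _ H _ /andP[s0 st]; apply: H. Qed.

Lemma traj_le (a b : 'I_n) t : (a <= b)%N -> 0 <= t -> gamma a t <= gamma b t.
Proof.
rewrite leq_eqVlt => /orP[/eqP/val_inj-> //|ab] t0.
rewrite leNgt; apply/negP => ba.
have dcont : {within `[0, t], continuous (fun s => gamma b s - gamma a s)}%classic.
  have [Hc _ _ _ _] := Hst.
  have dcont0 : {within [set s | 0 <= s], continuous (fun s => gamma b s - gamma a s)}%classic.
    by move=> s; apply: continuousB; [exact: (Hc b).1 | exact: (Hc a).1].
  by apply: continuous_subspaceW dcont0 => s; rewrite /= in_itv /= => /andP[].
have [c] : exists2 c, c \in `[0, t] & gamma b c - gamma a c = 0.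
  apply: IVT => //; rewrite !traj0 ge_min le_max; have := init_pos_lt ab.
  by move=> xab; apply/andP; split; apply/orP; [right | left]; lra.
rewrite in_itv /= => c0t /eqP; rewrite subr_eq0 => /eqP/(traj_stick c0t).
by lra.
Qed.

Lemma first_collision (a b : 'I_n) t :
  0 <= t -> gamma a t = gamma b t -> x a != x b ->
  exists T, [/\ 0 < T, gamma a T = gamma b T &
                forall s, 0 <= s < T -> gamma a s != gamma b s].
Proof.
move=> t0 Eab xab.
pose Z := [set s | 0 <= s /\ gamma a s = gamma b s]%classic.
have hZ : has_inf Z by split; [exists t | exists 0 => s []].
have lb s : Z s -> inf Z <= s by move=> Zs; apply: ge_inf => //; case: hZ.
have T0 : 0 <= inf Z by apply: lb_le_inf; [exists t | move=> s []].
have after s : inf Z < s -> gamma a s = gamma b s.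
  rewrite -subr_gt0 => sT; have [z [z0 Ez] zs] := inf_adherent sT hZ.
  by apply: traj_stick Ez; apply/andP; split; lra.
move: (inf Z) lb T0 after => T lb T0 after.
have ET : gamma a T = gamma b T.
  have [ua Ha] := traj_rslope a T0; have [ub Hb] := traj_rslope b T0.
  have [e e0 He] := rslope_comb (-1) Ha Hb.
  have E s : T < s <= T + e ->
      0 + 0 * (s - T) = -1 * gamma a T + gamma b T + (-1 * ua + ub) * (s - T).
    move=> /andP[Ts se]; rewrite -He; last by apply/andP; lra.
    by rewrite after //; ring.
  have e12 : T + e / 2 != T + e by rewrite lt_eqF //; lra.
  have /E E1 : T < T + e / 2 <= T + e by apply/andP; lra.
  have /E E2 : T < T + e <= T + e by apply/andP; lra.
  have [E0 _] := affine_eq2 e12 E1 E2.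
  lra.
exists T; split=> // [|s /andP[s0 sT]].
  rewrite lt_def T0 andbT; apply: contra_neq xab => T0'.
  by rewrite -!traj0 -T0'.
by apply/eqP => Es; have := lb s (conj s0 Es); lra.
Qed.

Lemma no_crossing (a b : 'I_n) T : val b = (val a).+1 ->
  (forall s, 0 <= s < T -> gamma a s != gamma b s) ->
  forall s (i j : 'I_n), 0 <= s < T -> gamma i s = gamma j s ->
  (i <= a)%N = (j <= a)%N.
Proof.
move=> ba sep s i j sT Eij.
wlog ij : i j Eij / (i <= j)%N.
  by move=> H; case: (leqP i j) => [|/ltnW] ?; [|symmetry]; apply: H.
apply/idP/idP => [ia|]; last exact: leq_trans.
rewrite leqNgt; apply/negP => aj.
have s0 : 0 <= s by case/andP: sT.
have bj : (b <= j)%N by rewrite ba.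
have ab : (a <= b)%N by rewrite ba.
have := traj_le ia s0; have := traj_le bj s0; have := traj_le ab s0.
by move/eqP: (sep s sT); lra.
Qed.

Definition collision_closed (S : pred 'I_n) (T : R) :=
  forall s (i j : 'I_n), 0 < s < T -> S i -> gamma j s = gamma i s -> S j.

Lemma momentum_balance (S : pred 'I_n) t : 0 < t ->
  (forall i j, S i -> gamma j t = gamma i t -> S j) ->
  exists u, lslope (fun s => \sum_(i | S i) m i * gamma i s) t u /\
            rslope (fun s => \sum_(i | S i) m i * gamma i s) t u.
Proof.
move=> t0 closedS.
have [w Hw] := choice (fun i => traj_lslope i t0).
have [u Hu] := choice (fun i => traj_rslope i (ltW t0)).
have uE i : u i = weighted_mean m (fun j => gamma j t == gamma i t) w.
  apply: rslope_unique (Hu i) _.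
  by case: Hst => _ _ _ _ rule; apply: rule => // j _; exact: Hw.
exists (\sum_(i | S i) m i * w i); split; first exact: lslope_wsum.
rewrite -(sum_class_weighted_means mass_gt0 _ closedS).
rewrite -(eq_bigr _ (fun i _ => congr1 (fun y => m i * y) (uE i))).
exact: rslope_wsum.
Qed.

Lemma collision_closed_momentum (S : pred 'I_n) T :
  0 < T -> collision_closed S T ->
  \sum_(i | S i) m i * gamma i T =
  \sum_(i | S i) m i * x i + T * \sum_(i | S i) m i * v i.
Proof.
move=> T0 closedS.
have rslope0 : rslope (fun s => \sum_(i | S i) m i * gamma i s) 0
                      (\sum_(i | S i) m i * v i).
  by apply: rslope_wsum => i _; case: Hst.
have := affine_of_slopes rslope0
  (fun t tT => momentum_balance (andP tT).1 (fun i j => closedS t i j tT)).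
move=> /lslope_affine_before affine.
have [w Hw] := choice (fun i => traj_lslope i T0).
have [_ ->] := affine _ T0 (lslope_wsum _ _ (fun i _ => Hw i)).
by rewrite mulrC; congr (_ + _); apply: eq_bigr => i _; rewrite traj0.
Qed.

Lemma collision_closed_position (S : pred 'I_n) T X i0 :
  0 < T -> collision_closed S T -> S i0 -> (forall i, S i -> gamma i T = X) ->
  X = weighted_mean m S x + T * weighted_mean m S v.
Proof.
move=> T0 closedS Si0 atX; have M0 := sum_mass_gt0 mass_gt0 Si0.
have := collision_closed_momentum T0 closedS.
rewrite (eq_bigr (fun i => X * m i)) => [|i Si]; last by rewrite atX // mulrC.
by rewrite -mulr_sumr /weighted_mean mulrA -mulrDl => <-; rewrite mulfK ?gt_eqF.
Qed.

Lemma adjacent_side_collision_closed (a b : 'I_n) T (side : bool) :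
  val b = (val a).+1 ->
  (forall s, 0 <= s < T -> gamma a s != gamma b s) ->
  collision_closed (fun i => (gamma i T == gamma a T) && ((i <= a)%N == side)) T.
Proof.
move=> ba sep s i j /andP[s0 sT] /andP[/eqP iT /eqP ia] Eji.
have s0T : 0 <= s <= T by apply/andP; split; lra.
have s0T' : 0 <= s < T by apply/andP; split; lra.
by rewrite (traj_stick (t := T) s0T Eji) iT (no_crossing ba sep s0T' Eji) ia !eqxx.
Qed.

Lemma adjacent_collision_blocks (a b : 'I_n) T : val b = (val a).+1 -> 0 < T ->
  gamma a T = gamma b T -> (forall s, 0 <= s < T -> gamma a s != gamma b s) ->
  exists j l : nat, [/\ (j <= a)%N, (b <= l < n)%N,
    gamma a T = weighted_mean m (fun i : 'I_n => (j <= i < b)%N) x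
                + T * weighted_mean m (fun i : 'I_n => (j <= i < b)%N) v &
    gamma a T = weighted_mean m (fun i : 'I_n => (b <= i < l.+1)%N) x
                + T * weighted_mean m (fun i : 'I_n => (b <= i < l.+1)%N) v].
Proof.
move=> ba T0 ET sep.
have [j [l [/andP[ja al] level]]] :=
  level_set_interval (g := fun i => gamma i T) a (fun i j ij => traj_le ij (ltW T0)).
have bl : (b <= l)%N by move: (level b); rewrite -ET eqxx => /esym/andP[].
pose block (side : bool) :=
  if side then fun i : 'I_n => (j <= i < b)%N else fun i : 'I_n => (b <= i < l.+1)%N.
have blockE side :
    (fun i => (gamma i T == gamma a T) && ((i <= a)%N == side)) = block side.
  apply/funext => i; case: side; rewrite /= level ba ltnS; case: (leqP i a) => ia.
  all: rewrite /= ?eqxx ?andbT ?andbF //.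
  - by rewrite (leq_trans ia al) andbT.
  - by rewrite (leq_trans ja (ltnW ia)).
have position side i0 : (gamma i0 T == gamma a T) && ((i0 <= a)%N == side) ->
    gamma a T = weighted_mean m (block side) x + T * weighted_mean m (block side) v.
  move=> Si0; rewrite -blockE.
  have closed := adjacent_side_collision_closed (side := side) ba sep.
  by apply: (collision_closed_position T0 closed Si0) => i /andP[/eqP].
exists j, l; split; rewrite ?bl ?ltn_ord //.
  by apply: (position true a); rewrite !eqxx leqnn.
by apply: (position false b); rewrite -ET eqxx ba ltnn.
Qed.

End StickyParticles.

Section ConvexEnvelope.
Context {R : realType}.

Lemma convex_envelope_le_chord (a b c y z l : R) (f : R -> R) :
  (forall u, a <= u <= b -> c <= f u) -> a <= y <= b -> a <= z <= b -> 0 <= l <= 1 ->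
  convex_envelope a b f (l * y + (1 - l) * z) <= l * f y + (1 - l) * f z.
Proof.
move=> fc yab zab /andP[l0 l1]; apply: ge_sup.
  (* the constant c is a convex minorant, so the supremum is not over the empty set *)
  exists c, (fun=> c); split=> // y' z' l' _ _ _.
  by rewrite -mulrDl addrC subrK mul1r.
move=> _ [g [gc gf ->]]; apply: le_trans (gc _ _ _ yab zab (introT andP (conj l0 l1))) _.
by apply: lerD; apply: ler_wpM2l; rewrite ?subr_ge0 ?gf.
Qed.

Lemma convex_envelope_slope_le (a b c y0 y1 y2 : R) (f : R -> R) :
  (forall u, a <= u <= b -> c <= f u) -> a <= y0 -> y0 < y1 -> y1 < y2 -> y2 <= b ->
  convex_envelope a b f y1 = f y1 ->
  (f y1 - f y0) / (y1 - y0) <= (f y2 - f y1) / (y2 - y1).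
Proof.
move=> fc ay0 y01 y12 y2b env.
have y20 : y2 - y0 != 0 by rewrite subr_eq0 gt_eqF //; lra.
have y0ab : a <= y0 <= b by apply/andP; lra.
have y2ab : a <= y2 <= b by apply/andP; lra.
have l01 : 0 <= (y2 - y1) / (y2 - y0) <= 1.
  apply/andP; split; first by apply: divr_ge0; lra.
  by rewrite ler_pdivrMr ?mul1r; lra.
have := convex_envelope_le_chord fc y0ab y2ab l01.
have -> : (y2 - y1) / (y2 - y0) * y0 + (1 - (y2 - y1) / (y2 - y0)) * y2 = y1 by field.
have y20p : 0 <= y2 - y0 by lra.
rewrite env => /(ler_wpM2l y20p) key.
rewrite ler_pdivrMr ?subr_gt0 // mulrAC ler_pdivlMr ?subr_gt0 // -subr_ge0.
have -> : (f y2 - f y1) * (y1 - y0) - (f y1 - f y0) * (y2 - y1) =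
  (y2 - y0) * ((y2 - y1) / (y2 - y0) * f y0 + (1 - (y2 - y1) / (y2 - y0)) * f y2)
  - (y2 - y0) * f y1 by field.
by rewrite subr_ge0.
Qed.

End ConvexEnvelope.

Section PrefixHull.
Context {R : realType} (n : nat) (m v : 'I_n -> R) (f : R -> R).
Local Notation M := (mass_prefix m).
Local Notation P := (mom_prefix m v).
Hypothesis m_gt0 : forall i, 0 < m i.
Hypothesis f_segment : forall (k : nat) (y : R), (k < n)%N -> M k <= y <= M k.+1 ->
  f y = P k + (y - M k) * (P k.+1 - P k) / (M k.+1 - M k).

Lemma sum_prefix_block (F : 'I_n -> R) j k : (j <= k)%N ->
  \sum_(i < n | (j <= i < k)%N) F i =
  \sum_(i < n | (i < k)%N) F i - \sum_(i < n | (i < j)%N) F i.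
Proof.
move=> jk; rewrite [X in _ = X - _](bigID (fun i : 'I_n => (i < j)%N)) /=.
have -> : \sum_(i < n | (i < k)%N && (i < j)%N) F i = \sum_(i < n | (i < j)%N) F i.
  by apply: eq_bigl => i; case: (ltnP i j) => ij; rewrite ?andbT ?andbF // (leq_trans ij).
by rewrite addrC addrK; apply: eq_bigl => i; rewrite -leqNgt andbC.
Qed.

Lemma mass_prefix0 : M 0 = 0.
Proof. by rewrite /mass_prefix big_pred0. Qed.

Lemma mass_prefix_lt j k : (j < k)%N -> (k <= n)%N -> M j < M k.
Proof.
move=> jk kn; have jn : (j < n)%N by apply: leq_trans jk kn.
rewrite -subr_gt0 /mass_prefix -(sum_prefix_block m (ltnW jk)).
by apply: (sum_mass_gt0 m_gt0 (i0 := Ordinal jn)); rewrite /= leqnn.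
Qed.

Lemma mass_prefix_le j k : (j <= k)%N -> (k <= n)%N -> M j <= M k.
Proof.
by rewrite leq_eqVlt => /orP[/eqP-> // | jk] kn; apply/ltW/mass_prefix_lt.
Qed.

Lemma f_mass_prefix k : (0 < n)%N -> (k <= n)%N -> f (M k) = P k.
Proof.
move=> n0; rewrite leq_eqVlt => /orP[/eqP-> | kn]; last first.
  rewrite (f_segment kn) ?subrr ?mul0r ?addr0 // lexx /=.
  exact: mass_prefix_le (leqnSn k) kn.
have n1 : (n.-1 < n)%N by rewrite prednK.
have Mlt : M n.-1 < M n by apply: mass_prefix_lt; rewrite ?prednK.
have dn : M n - M n.-1 != 0 by rewrite subr_eq0 gt_eqF.
rewrite (f_segment n1) prednK //; last by rewrite lexx andbT ltW.
by rewrite mulrAC mulfV // mul1r addrC subrK.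
Qed.

Lemma mass_prefix_segment y : (0 < n)%N -> 0 <= y <= M n ->
  exists2 k, (k < n)%N & M k <= y <= M k.+1.
Proof.
move=> n0 /andP[y0 yn].
have Pn : exists k, (k < n)%N && (y <= M k.+1) by exists n.-1; rewrite prednK ?leqnn.
have [k /andP[kn yk] kmin] := ex_minnP Pn; exists k; rewrite // yk andbT.
case: k kn yk kmin => [|k] kn yk kmin; first by rewrite mass_prefix0.
rewrite leNgt; apply/negP => /ltW yk'.
by have := kmin k; rewrite (ltnW kn) yk' ltnn => /(_ isT).
Qed.

Lemma mom_prefix_ge k : - \sum_(i < n) `|m i * v i| <= P k.
Proof.
rewrite lerNl; apply: le_trans (ler_norm _) _; rewrite normrN.
apply: le_trans (ler_norm_sum _ _ _) _.
rewrite [X in _ <= X](bigID (fun i : 'I_n => (i < k)%N)) /= lerDl.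
by apply: sumr_ge0 => i _; exact: normr_ge0.
Qed.

Lemma f_lower_bound : (0 < n)%N ->
  forall y, 0 <= y <= M n -> - \sum_(i < n) `|m i * v i| <= f y.
Proof.
move=> n0 y y0n; have [k kn /andP[yk yk1]] := mass_prefix_segment n0 y0n.
have Mk : M k < M k.+1 := mass_prefix_lt (ltnSn k) kn.
have := mom_prefix_ge k; have := mom_prefix_ge k.+1.
rewrite (f_segment kn) ?yk // mulrAC.
have : 0 <= (y - M k) / (M k.+1 - M k) <= 1.
  apply/andP; split; first by apply: divr_ge0; lra.
  by rewrite ler_pdivrMr ?mul1r; lra.
move: ((y - M k) / (M k.+1 - M k)) (- \sum_(i < n) `|m i * v i|).
move=> th c /andP[th0 th1] ck1 ck.
have : 0 <= (1 - th) * (P k - c) by apply: mulr_ge0; lra.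
have : 0 <= th * (P k.+1 - c) by apply: mulr_ge0; lra.
have : P k + th * (P k.+1 - P k) - c = (1 - th) * (P k - c) + th * (P k.+1 - c) by ring.
lra.
Qed.

Lemma block_mean_velocity j k : (j <= k)%N ->
  weighted_mean m (fun i : 'I_n => (j <= i < k)%N) v = (P k - P j) / (M k - M j).
Proof. by move=> jk; rewrite /weighted_mean !sum_prefix_block. Qed.

Lemma block_mean_velocity_le j k l : (j < k)%N -> (k < l)%N -> (l <= n)%N ->
  convex_envelope 0 (M n) f (M k) = P k ->
  weighted_mean m (fun i : 'I_n => (j <= i < k)%N) v <=
  weighted_mean m (fun i : 'I_n => (k <= i < l)%N) v.
Proof.
move=> jk kl ln env; have kn := ltnW (leq_trans kl ln).
have jn := leq_trans (ltnW jk) kn; have n0 := leq_ltn_trans (leq0n k) (leq_trans kl ln).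
rewrite !block_mean_velocity ?(ltnW jk) ?(ltnW kl) //.
rewrite -(f_mass_prefix n0 jn) -(f_mass_prefix n0 kn) -(f_mass_prefix n0 ln).
apply: (convex_envelope_slope_le (f_lower_bound n0)); rewrite ?f_mass_prefix //.
- by rewrite -mass_prefix0 mass_prefix_le.
- exact: mass_prefix_lt.
- exact: mass_prefix_lt.
- exact: mass_prefix_le.
Qed.

End PrefixHull.

Theorem lemma3p1 (R : realType) (n : nat) (m x v : 'I_n -> R)
    (gamma : 'I_n -> R -> R) (f : R -> R) :
  particle_system m x ->
  sticky_trajectories m x v gamma ->
  (* the graph of f on [0, sum m] is the union of the segments [P_k, P_{k+1}] *)
  (forall (k : nat) (y : R), (k < n)%N ->
      mass_prefix m k <= y <= mass_prefix m k.+1 ->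
      f y = mom_prefix m v k
            + (y - mass_prefix m k)
              * (mom_prefix m v k.+1 - mom_prefix m v k)
              / (mass_prefix m k.+1 - mass_prefix m k)) ->
  forall (k : nat) (p q : 'I_n),
    (k <= n)%N ->
    (* P_k lies on the graph of the convex envelope r of f *)
    convex_envelope 0 (mass_prefix m n) f (mass_prefix m k) = mom_prefix m v k ->
    (* hence a_{p+1} and a_{q+1} lie in different blocks T_i, T_j *)
    (p < k <= q)%N ->
    forall t : R, 0 <= t -> gamma p t <> gamma q t.
Proof.
move=> Hps Hst f_seg [//|k] p q kn env /andP[pk kq] t t0 Epq.
have an : (k < n)%N by lia.
have bn : (k.+1 < n)%N by have := ltn_ord q; lia.
pose a := Ordinal an; pose b := Ordinal bn.
have xab : x a < x b := init_pos_lt Hps (ltnSn k : (a < b)%N).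
have Eab : gamma a t = gamma b t.
  have := traj_le Hps Hst (pk : (p <= a)%N) t0.
  have := traj_le Hps Hst (leqnSn k : (a <= b)%N) t0.
  have := traj_le Hps Hst (kq : (b <= q)%N) t0.
  lra.
have [T [T0 ET sep]] := first_collision Hst t0 Eab (negbT (lt_eqF xab)).
have [j [l [ja /andP[bl ln] XL XR]]] :=
  adjacent_collision_blocks Hps Hst (erefl : val b = (val a).+1) T0 ET sep.
have vLR := block_mean_velocity_le (mass_gt0 Hps) f_seg
  (leq_ltn_trans ja (ltnSn k)) (bl : (k.+1 < l.+1)%N) ln env.
have xL : weighted_mean m (fun i : 'I_n => (j <= i < b)%N) x <= x a.
  apply: (weighted_mean_le (mass_gt0 Hps) (i0 := a)) => [|i /andP[_ ib]].
    by rewrite ja /=.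
  by apply: (init_pos_le Hps); rewrite -ltnS.
have xR : x b <= weighted_mean m (fun i : 'I_n => (b <= i < l.+1)%N) x.
  apply: (weighted_mean_ge (mass_gt0 Hps) (i0 := b)) => [|i /andP[bi _]].
    by rewrite leqnn ltnS.
  exact: (init_pos_le Hps).
have := ler_wpM2l (ltW T0) vLR; lra.
Qed.
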